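(* For a coupled relation $\mathcal{R}$ let $\mathcal{R}^C=\left(\mathcal{R}_1^\star,\ \mathcal{R}_2\langle\mathcal{R}_1^\star\rangle\cup\mathcal{R}_1^\star\right)$. Then: (a) for all coupled relations $\mathcal{R},\mathcal{S}$ with $\mathcal{R}\subseteq\mathcal{S}$ and $\mathcal{R}\rightarrowtail\mathcal{S}$, we have $\mathcal{R}^C\subseteq\mathcal{S}^C$ and $\mathcal{R}^C\rightarrowtail\mathcal{S}^C$; (b) if $\mathcal{R}$ is a coupled relation with $\mathcal{R}\rightarrowtail\mathcal{R}^C$, then $\mathcal{R}$ is contained (componentwise) in some call-by-name coupled logical bisimulation; (c) if $\mathcal{R}$ is a call-by-name coupled logical bisimulation, then so is $\mathcal{R}^C$.
   Context: $\Lambda^\bullet$ is the set of closed $\lambda$-terms. Contexts are generated by $C::=x\mid[\cdot]\mid C\,C\mid\lambda x.C$, possibly with several holes numbered left to right; $C[\widetilde M]$ fills the $i$-th hole with $M_i$. For $\mathcal{R}\subseteq\Lambda^\bullet\times\Lambda^\bullet$, $\mathcal{R}^\star=\{(C[\widetilde M],C[\widetilde N]) : C\text{ a context},\ M_i\,\mathcal{R}\,N_i\ \forall i,\ C[\widetilde M],C[\widetilde N]\in\Lambda^\bullet\}$. For relations $\mathcal{R},\mathcal{R}'$ on $\Lambda^\bullet$, $\mathcal{R}\langle\mathcal{R}'\rangle=\{(E M_1\cdots M_k,\ F N_1\cdots N_k) : k\ge0,\ E\,\mathcal{R}\,F,\ M_i\,\mathcal{R}'\,N_i\ \forall i\}$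 (application associating to the left). A coupled relation is a pair $(\mathcal{R}_1,\mathcal{R}_2)$ of relations on $\Lambda^\bullet$ with $\mathcal{R}_1\subseteq\mathcal{R}_2$; inclusion is componentwise. Call-by-name reduction on closed terms: $MN\longrightarrow M'N$ if $M\longrightarrow M'$, and $(\lambda x.P)N\longrightarrow P[N/x]$; $\Longrightarrow$ is its reflexive transitive closure. For coupled relations $\mathcal{R},\mathcal{S}$, $\mathcal{R}\rightarrowtail\mathcal{S}$ holds iff whenever $M\,\mathcal{R}_2\,N$: (i) if $M\longrightarrow M'$ then $N\Longrightarrow N'$ for some $N'$ with $M'\,\mathcal{S}_2\,N'$; (ii) if $M=\lambda x.P$ then $N\Longrightarrow\lambda x.Q$ for some $Q$ such that $P[X/x]\,\mathcal{S}_2\,Q[Y/x]$ for all $X\,\mathcal{R}_1^\star\,Y$; (iii) the same conditions with $M$ and $N$ exchanged. A coupled relation $\mathcal{R}$ is a (call-by-name) coupled logical bisimulation iff $\mathcal{R}\rightarrowtail\mathcal{R}$. *)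

From Stdlib Require Import Arith List.
Import ListNotations.

Inductive term : Type :=
| Var : nat -> term
| App : term -> term -> term
| Lam : term -> term.

Fixpoint closed_at (k : nat) (t : term) : Prop :=
  match t with
  | Var n => n < k
  | App a b => closed_at k a /\ closed_at k b
  | Lam a => closed_at (S k) a
  end.

Definition closed (t : term) : Prop := closed_at 0 t.

Fixpoint lift (k : nat) (t : term) : term :=
  match t with
  | Var n => if n <? k then Var n else Var (S n)
  | App a b => App (lift k a) (lift k b)
  | Lam a => Lam (lift (S k) a)
  end.

Fixpoint subst (k : nat) (N : term) (t : term) : term :=
  match t with
  | Var n => if n =? k then N else if k <? n then Var (pred n) else Var n
  | App a b => App (subst k N a) (subst k N b)
  | Lam a => Lam (subst (S k) (lift 0 N) a)
  end.

(* P[N/x] for the body P of λx.P *)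
Definition subst0 (P N : term) : term := subst 0 N P.

Inductive step : term -> term -> Prop :=
| step_app : forall M M' N, step M M' -> step (App M N) (App M' N)
| step_beta : forall P N, step (App (Lam P) N) (subst0 P N).

Definition steps : term -> term -> Prop := Relation_Operators.clos_refl_trans term step.

(* multi-hole contexts; holes numbered left to right *)
Inductive ctx : Type :=
| CVar : nat -> ctx
| CHole : ctx
| CApp : ctx -> ctx -> ctx
| CLam : ctx -> ctx.

Fixpoint nholes (C : ctx) : nat :=
  match C with
  | CVar _ => 0
  | CHole => 1
  | CApp C1 C2 => nholes C1 + nholes C2
  | CLam C1 => nholes C1
  end.

Fixpoint fill (C : ctx) (l : list term) : term :=
  match C with
  | CVar n => Var n
  | CHole => hd (Var 0) l
  | CApp C1 C2 => App (fill C1 (firstn (nholes C1) l)) (fill C2 (skipn (nholes C1) l))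
  | CLam C1 => Lam (fill C1 l)
  end.

Definition rel := term -> term -> Prop.

Definition star (R : rel) : rel := fun X Y =>
  exists (C : ctx) (Ms Ns : list term),
    length Ms = nholes C /\ Forall2 R Ms Ns /\
    X = fill C Ms /\ Y = fill C Ns /\ closed X /\ closed Y.

Definition apps (E : term) (l : list term) : term := fold_left App l E.

Definition hrel (R R' : rel) : rel := fun X Y =>
  exists E F Ms Ns, R E F /\ Forall2 R' Ms Ns /\ X = apps E Ms /\ Y = apps F Ns.

Definition runion (R R' : rel) : rel := fun X Y => R X Y \/ R' X Y.

Definition rincl (R R' : rel) : Prop := forall X Y, R X Y -> R' X Y.

Record crel : Type := mkCrel { c1 : rel; c2 : rel }.

Definition rel_on_closed (R : rel) : Prop := forall X Y, R X Y -> closed X /\ closed Y.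

Definition coupled (R : crel) : Prop :=
  rincl (c1 R) (c2 R) /\ rel_on_closed (c1 R) /\ rel_on_closed (c2 R).

Definition cincl (R S : crel) : Prop := rincl (c1 R) (c1 S) /\ rincl (c2 R) (c2 S).

Definition progress (R S : crel) : Prop :=
  forall M N, c2 R M N ->
    (forall M', step M M' -> exists N', steps N N' /\ c2 S M' N') /\
    (forall P, M = Lam P -> exists Q, steps N (Lam Q) /\
        forall X Y, star (c1 R) X Y -> c2 S (subst0 P X) (subst0 Q Y)) /\
    (forall N', step N N' -> exists M', steps M M' /\ c2 S M' N') /\
    (forall Q, N = Lam Q -> exists P, steps M (Lam P) /\
        forall X Y, star (c1 R) X Y -> c2 S (subst0 P X) (subst0 Q Y)).

Definition coupled_logical_bisim (R : crel) : Prop := coupled R /\ progress R R.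

Definition closureC (R : crel) : crel :=
  mkCrel (star (c1 R)) (runion (hrel (c2 R) (star (c1 R))) (star (c1 R))).

(* R^C_2 relates two shapes of closed terms: E M~ and F N~ with E R_2 F and
   arguments related by R_1^*, and pairs in R_1^*. Call-by-name reduction
   preserves both. In E M~ a step either reduces the head E, answered by
   R >-> S, or is a beta-step at a lambda head, whose instantiated body is
   again answered by R >-> S. A pair in R_1^* is, along its head spine, either
   of the first shape or has related lambda heads, and then the beta-reduct
   stays in R_1^* because contexts are closed under substitution. The
   right-to-left clauses of >-> follow by applying this to the converse
   relations. For (b) take B = R^C, using (R^C)^C_2 <= R^C_2 (nested argument
   lists concatenate); (c) is (a) with S = R. *)

From Stdlib Require Import Arith List Lia Relations.
Import ListNotations.

Inductive ctx_clos (R : rel) : rel :=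
| ctx_clos_rel : forall X Y, R X Y -> ctx_clos R X Y
| ctx_clos_var : forall n, ctx_clos R (Var n) (Var n)
| ctx_clos_app : forall a b c d,
    ctx_clos R a c -> ctx_clos R b d -> ctx_clos R (App a b) (App c d)
| ctx_clos_lam : forall a c, ctx_clos R a c -> ctx_clos R (Lam a) (Lam c).

Lemma Forall2_firstn_skipn (A B : Type) (R : A -> B -> Prop) l l' n :
  Forall2 R l l' -> Forall2 R (firstn n l) (firstn n l') /\ Forall2 R (skipn n l) (skipn n l').
Proof.
  intros H; revert n; induction H; intros [|n]; simpl; auto.
  destruct (IHForall2 n); split; auto.
Qed.

Lemma firstn_length_app (A : Type) (l1 l2 : list A) : firstn (length l1) (l1 ++ l2) = l1.
Proof. induction l1; simpl; f_equal; auto. Qed.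

Lemma skipn_length_app (A : Type) (l1 l2 : list A) : skipn (length l1) (l1 ++ l2) = l2.
Proof. induction l1; simpl; auto. Qed.

Lemma ctx_clos_fill R C Ms Ns :
  length Ms = nholes C -> Forall2 R Ms Ns -> ctx_clos R (fill C Ms) (fill C Ns).
Proof.
  revert Ms Ns; induction C; intros Ms Ns Hlen HF; simpl in *.
  - apply ctx_clos_var.
  - destruct HF; simpl in Hlen; [lia | apply ctx_clos_rel; auto].
  - destruct (Forall2_firstn_skipn _ _ _ _ _ (nholes C1) HF).
    apply ctx_clos_app.
    + apply IHC1; auto. rewrite length_firstn; lia.
    + apply IHC2; auto. rewrite length_skipn; lia.
  - apply ctx_clos_lam; auto.
Qed.

Lemma ctx_clos_fill_inv R X Y : ctx_clos R X Y -> exists C Ms Ns,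
  length Ms = nholes C /\ Forall2 R Ms Ns /\ X = fill C Ms /\ Y = fill C Ns.
Proof.
  induction 1 as [X Y H | n | a b c d _ (C1 & M1 & N1 & L1 & F1 & -> & ->)
                                  _ (C2 & M2 & N2 & L2 & F2 & -> & ->)
                 | a c _ (C & Ms & Ns & L & F & -> & ->)].
  - exists CHole, [X], [Y]; auto.
  - exists (CVar n), [], []; auto.
  - assert (L1' : length N1 = nholes C1)
      by (rewrite <- L1; symmetry; eapply Forall2_length; eauto).
    exists (CApp C1 C2), (M1 ++ M2), (N1 ++ N2); simpl; repeat split.
    + rewrite length_app; lia.
    + apply Forall2_app; auto.
    + rewrite <- L1, firstn_length_app, skipn_length_app; auto.
    + rewrite <- L1', firstn_length_app, skipn_length_app; auto.
  - exists (CLam C), Ms, Ns; auto.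
Qed.

Lemma star_ctx_clos R X Y : star R X Y <-> ctx_clos R X Y /\ closed X /\ closed Y.
Proof.
  split.
  - intros (C & Ms & Ns & L & F & -> & -> & cX & cY). auto using ctx_clos_fill.
  - intros (H & cX & cY).
    destruct (ctx_clos_fill_inv _ _ _ H) as (C & Ms & Ns & L & F & EX & EY).
    exists C, Ms, Ns; repeat split; auto.
Qed.

Lemma star_closed R X Y : star R X Y -> closed X /\ closed Y.
Proof. rewrite star_ctx_clos; tauto. Qed.

Lemma lift_closed_at t n k : closed_at n t -> n <= k -> lift k t = t.
Proof.
  revert n k; induction t; simpl; intros n0 k H Hk.
  - destruct (Nat.ltb_spec n k); auto; lia.
  - destruct H; f_equal; eauto.
  - f_equal; apply (IHt (S n0)); auto; lia.
Qed.

Lemma subst_closed_at t n k N : closed_at n t -> n <= k -> subst k N t = t.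
Proof.
  revert n k N; induction t; simpl; intros n0 k N H Hk.
  - destruct (Nat.eqb_spec n k); [lia|]. destruct (Nat.ltb_spec k n); auto; lia.
  - destruct H; f_equal; eauto.
  - f_equal; apply (IHt (S n0)); auto; lia.
Qed.

Lemma closed_at_lift t n k : closed_at n t -> closed_at (S n) (lift k t).
Proof.
  revert n k; induction t; simpl; intros n0 k H.
  - destruct (Nat.ltb_spec n k); simpl; lia.
  - destruct H; split; eauto.
  - apply IHt; auto.
Qed.

Lemma closed_at_subst t n k N :
  k <= n -> closed_at (S n) t -> closed_at n N -> closed_at n (subst k N t).
Proof.
  revert n k N; induction t; simpl; intros n0 k N Hk H HN.
  - destruct (Nat.eqb_spec n k); auto. destruct (Nat.ltb_spec k n); simpl; lia.
  - destruct H; split; eauto.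
  - apply IHt; auto using closed_at_lift; lia.
Qed.

Lemma closed_subst0 P X : closed (Lam P) -> closed X -> closed (subst0 P X).
Proof. apply closed_at_subst; auto. Qed.

Lemma apps_app E Ms Ns : apps E (Ms ++ Ns) = apps (apps E Ms) Ns.
Proof. apply fold_left_app. Qed.

Lemma closed_apps E Ms : closed (apps E Ms) <-> closed E /\ Forall closed Ms.
Proof.
  revert E; induction Ms; simpl; intros E.
  - split; [auto | tauto].
  - unfold apps in *; simpl; rewrite IHMs, Forall_cons_iff. unfold closed; simpl; tauto.
Qed.

Lemma step_closed M M' : step M M' -> closed M -> closed M'.
Proof.
  unfold closed; induction 1; simpl; intros [cM cN]; [split; auto | apply closed_subst0; auto].
Qed.

Lemma step_apps Ms E E' : step E E' -> step (apps E Ms) (apps E' Ms).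
Proof. revert E E'; induction Ms; simpl; intros; auto using step. Qed.

Lemma steps_apps Ms E E' : steps E E' -> steps (apps E Ms) (apps E' Ms).
Proof.
  induction 1; [apply rt_step, step_apps; auto | apply rt_refl | eapply rt_trans; eauto].
Qed.

Lemma step_apps_beta P X Ms : step (apps (Lam P) (X :: Ms)) (apps (subst0 P X) Ms).
Proof. exact (step_apps Ms _ _ (step_beta P X)). Qed.

Lemma apps_step_inv Ms E M' : step (apps E Ms) M' ->
  (exists E', step E E' /\ M' = apps E' Ms) \/
  (exists P X Ms', E = Lam P /\ Ms = X :: Ms' /\ M' = apps (subst0 P X) Ms').
Proof.
  revert E M'; induction Ms as [|X Ms IH]; simpl; intros E M' H.
  - left; eauto.
  - destruct (IH _ _ H) as [(E' & HE & ->) | (P & X' & Ms' & HE & _)]; [|discriminate].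
    inversion HE; subst; [left | right]; eauto 6.
Qed.

Lemma apps_eq_lam E Ms P : apps E Ms = Lam P -> Ms = [] /\ E = Lam P.
Proof.
  induction Ms as [|X Ms _] using rev_ind; auto.
  rewrite apps_app; discriminate.
Qed.

Lemma ctx_clos_mono R S : rincl R S -> rincl (ctx_clos R) (ctx_clos S).
Proof.
  intros HRS X Y H; induction H;
    [apply ctx_clos_rel | apply ctx_clos_var | apply ctx_clos_app | apply ctx_clos_lam]; auto.
Qed.

Lemma ctx_clos_idem R : rincl (ctx_clos (ctx_clos R)) (ctx_clos R).
Proof.
  intros X Y H; induction H; [| apply ctx_clos_var | apply ctx_clos_app | apply ctx_clos_lam]; auto.
Qed.

Lemma ctx_clos_apps R E F Ms Ns :
  ctx_clos R E F -> Forall2 (ctx_clos R) Ms Ns -> ctx_clos R (apps E Ms) (apps F Ns).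
Proof.
  intros HEF HF; revert E F HEF; induction HF; intros E F HEF; simpl; auto.
  apply IHHF; apply ctx_clos_app; auto.
Qed.

Section Substitutive.
Variable R : rel.
Hypothesis R_closed : rel_on_closed R.

(* [R] relates only closed terms, which lifting and substitution leave unchanged. *)
Lemma ctx_clos_lift a b k : ctx_clos R a b -> ctx_clos R (lift k a) (lift k b).
Proof.
  intros H; revert k; induction H; intros k; simpl.
  - destruct (R_closed _ _ H).
    rewrite !(lift_closed_at _ 0); auto with arith; apply ctx_clos_rel; auto.
  - destruct (n <? k); apply ctx_clos_var.
  - apply ctx_clos_app; auto.
  - apply ctx_clos_lam; auto.
Qed.

Lemma ctx_clos_subst a b k X Y :
  ctx_clos R a b -> ctx_clos R X Y -> ctx_clos R (subst k X a) (subst k Y b).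
Proof.
  intros H; revert k X Y; induction H; intros k X' Y' HXY; simpl.
  - destruct (R_closed _ _ H).
    rewrite !(subst_closed_at _ 0); auto with arith; apply ctx_clos_rel; auto.
  - destruct (n =? k); auto. destruct (k <? n); apply ctx_clos_var.
  - apply ctx_clos_app; auto.
  - apply ctx_clos_lam; auto using ctx_clos_lift.
Qed.

End Substitutive.

Lemma star_mono R S : rincl R S -> rincl (star R) (star S).
Proof.
  intros H X Y. rewrite !star_ctx_clos. intros (HXY & cX & cY).
  split; auto. eapply ctx_clos_mono; eauto.
Qed.

Lemma star_idem R : rincl (star (star R)) (star R).
Proof.
  intros X Y. rewrite !star_ctx_clos. intros (HXY & cX & cY).
  split; auto. apply ctx_clos_idem.
  eapply ctx_clos_mono; [|exact HXY]. intros ? ? ?; apply star_ctx_clos; auto.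
Qed.

Lemma rel_sub_star R : rel_on_closed R -> rincl R (star R).
Proof.
  intros HR X Y H. destruct (HR _ _ H). apply star_ctx_clos; split; auto. apply ctx_clos_rel; auto.
Qed.

Lemma star_transp R X Y : star (transp term R) X Y <-> star R Y X.
Proof.
  split; intros (C & Ms & Ns & L & F & EX & EY & cX & cY);
    exists C, Ns, Ms; repeat split; auto;
    solve [ rewrite <- L; symmetry; eapply Forall2_length; eauto
          | apply Forall2_flip; auto ].
Qed.

Lemma Forall2_ctx_clos_star R Ms Ns : Forall2 (ctx_clos R) Ms Ns ->
  Forall closed Ms -> Forall closed Ns -> Forall2 (star R) Ms Ns.
Proof.
  induction 1; intros cMs cNs; inversion cMs; inversion cNs; subst; constructor; auto.
  apply star_ctx_clos; auto.
Qed.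

Lemma Forall2_star_closed R Ms Ns : Forall2 (star R) Ms Ns -> Forall closed Ms /\ Forall closed Ns.
Proof.
  induction 1 as [|X Y Ms Ns H _ [? ?]]; auto.
  destruct (star_closed _ _ _ H); split; constructor; auto.
Qed.

(* The head of a closed term is never a variable. *)
Lemma ctx_clos_spine R M N : ctx_clos R M N -> closed M ->
  (exists E F Ms Ns, R E F /\ Forall2 (ctx_clos R) Ms Ns /\ M = apps E Ms /\ N = apps F Ns) \/
  (exists P Q Ms Ns, ctx_clos R P Q /\ Forall2 (ctx_clos R) Ms Ns /\
     M = apps (Lam P) Ms /\ N = apps (Lam Q) Ns).
Proof.
  intros H; induction H as [X Y H | n | a b c d Hac IHac Hbd _ | a c Hac _]; intros cM.
  - left; exists X, Y, [], []; auto.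
  - unfold closed in cM; simpl in cM; lia.
  - destruct cM as [ca _].
    destruct (IHac ca) as [(E & F & Ms & Ns & h1 & h2 & -> & ->)
                         | (P & Q & Ms & Ns & h1 & h2 & -> & ->)];
      [left; exists E, F | right; exists P, Q];
      exists (Ms ++ [b]), (Ns ++ [d]); rewrite !apps_app;
      repeat split; auto using Forall2_app.
  - right; exists a, c, [], []; auto.
Qed.

Definition progress_fwd (R S : crel) : Prop :=
  forall M N, c2 R M N ->
    (forall M', step M M' -> exists N', steps N N' /\ c2 S M' N') /\
    (forall P, M = Lam P -> exists Q, steps N (Lam Q) /\
        forall X Y, star (c1 R) X Y -> c2 S (subst0 P X) (subst0 Q Y)).

Definition crel_transp (R : crel) : crel :=
  mkCrel (transp term (c1 R)) (transp term (c2 R)).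

Lemma progress_fwd_split R S :
  progress R S <-> progress_fwd R S /\ progress_fwd (crel_transp R) (crel_transp S).
Proof.
  split.
  - intros H; split; intros M N HMN.
    + destruct (H M N HMN) as (Hstep & Hlam & _); auto.
    + destruct (H N M HMN) as (_ & _ & Hstep & Hlam); split; auto.
      intros P HP. destruct (Hlam P HP) as (Q & HQ & Hsub).
      exists Q; split; auto. intros X Y HXY. apply Hsub, star_transp; auto.
  - intros [H1 H2] M N HMN.
    destruct (H1 M N HMN) as (Hstep & Hlam). destruct (H2 N M HMN) as (Hstep' & Hlam').
    repeat split; auto.
    intros Q HQ. destruct (Hlam' Q HQ) as (P & HP & Hsub).
    exists P; split; auto. intros X Y HXY. apply Hsub, star_transp; auto.
Qed.

Lemma progress_fwd_mono R R' S S' : rincl (c1 R') (c1 R) -> rincl (c2 R') (c2 R) ->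
  rincl (c2 S) (c2 S') -> progress_fwd R S -> progress_fwd R' S'.
Proof.
  intros H1 H2 H3 H M N HMN. destruct (H M N (H2 _ _ HMN)) as (Hstep & Hlam). split.
  - intros M' HM'. destruct (Hstep M' HM') as (N' & ? & ?); eauto.
  - intros P HP. destruct (Hlam P HP) as (Q & HQ & Hsub).
    exists Q; split; auto. intros X Y HXY. apply H3, Hsub. eapply star_mono; eauto.
Qed.

Lemma progress_mono_r R S S' : rincl (c2 S) (c2 S') -> progress R S -> progress R S'.
Proof.
  intros HS. rewrite !progress_fwd_split. intros [H1 H2].
  split; eapply progress_fwd_mono; eauto; intros X Y; auto; apply HS.
Qed.

Lemma closureC_transp_c2 R X Y :
  c2 (closureC (crel_transp R)) X Y -> c2 (closureC R) Y X.
Proof.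
  intros [(E & F & Ms & Ns & HEF & HMN & -> & ->) | H].
  - left. exists F, E, Ns, Ms; repeat split; auto.
    apply Forall2_flip. eapply Forall2_impl; [|exact HMN]. intros ? ? ?; apply star_transp; auto.
  - right. apply star_transp; auto.
Qed.

Lemma closureC_transp_c2_inv R X Y :
  c2 (closureC R) Y X -> c2 (closureC (crel_transp R)) X Y.
Proof. exact (closureC_transp_c2 (crel_transp R) Y X). Qed.

Section ClosureProgress.
Variables R1 R2 S1 S2 : rel.
Hypothesis R1_closed : rel_on_closed R1.
Hypothesis R1_sub_R2 : rincl R1 R2.
Hypothesis R1_sub_S1 : rincl R1 S1.
Hypothesis fwd_R_S : progress_fwd (mkCrel R1 R2) (mkCrel S1 S2).

Let RC := closureC (mkCrel R1 R2).
Let SC := closureC (mkCrel S1 S2).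

Lemma hrel_step_sim E F Ms Ns M' : R2 E F -> Forall2 (star R1) Ms Ns ->
  step (apps E Ms) M' -> exists N', steps (apps F Ns) N' /\ c2 SC M' N'.
Proof.
  intros HEF HMN HM'. destruct (fwd_R_S E F HEF) as (Hstep & Hlam).
  assert (args_S : forall Ms Ns, Forall2 (star R1) Ms Ns -> Forall2 (star S1) Ms Ns)
    by (intros; eapply Forall2_impl; [apply star_mono; exact R1_sub_S1 | eauto]).
  destruct (apps_step_inv _ _ _ HM') as [(E' & HE & ->) | (P & X & Ms' & -> & -> & ->)].
  - destruct (Hstep E' HE) as (F' & HF' & HEF').
    exists (apps F' Ns); split; [apply steps_apps; auto|].
    left; exists E', F', Ms, Ns; repeat split; auto.
  - destruct (Hlam P eq_refl) as (Q & HQ & Hsub).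
    inversion HMN as [|? Y ? Ns' HXY HMN']; subst.
    exists (apps (subst0 Q Y) Ns'); split.
    + eapply rt_trans; [apply (steps_apps (Y :: Ns')); eauto | apply rt_step, step_apps_beta].
    + left; exists (subst0 P X), (subst0 Q Y), Ms', Ns'; repeat split; auto.
Qed.

Lemma hrel_lam_sim E F Ms Ns P : R2 E F -> Forall2 (star R1) Ms Ns ->
  apps E Ms = Lam P -> exists Q, steps (apps F Ns) (Lam Q) /\
    forall X Y, star (c1 RC) X Y -> c2 SC (subst0 P X) (subst0 Q Y).
Proof.
  intros HEF HMN HP. destruct (apps_eq_lam _ _ _ HP) as [-> ->].
  inversion HMN; subst.
  destruct (fwd_R_S _ _ HEF) as (_ & Hlam). destruct (Hlam P eq_refl) as (Q & HQ & Hsub).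
  exists Q; split; auto.
  intros X Y HXY. left. exists (subst0 P X), (subst0 Q Y), [], []; repeat split; auto.
  apply Hsub, star_idem; auto.
Qed.

Lemma star_lam_step_sim P Q Ms Ns M' :
  ctx_clos R1 P Q -> Forall2 (ctx_clos R1) Ms Ns ->
  closed (apps (Lam P) Ms) -> closed (apps (Lam Q) Ns) ->
  step (apps (Lam P) Ms) M' -> exists N', steps (apps (Lam Q) Ns) N' /\ c2 SC M' N'.
Proof.
  intros HPQ HMN cM cN HM'.
  destruct (apps_step_inv _ _ _ HM') as [(E' & HE & _) | (P' & X & Ms' & HE & -> & ->)];
    [inversion HE|].
  injection HE as <-. inversion HMN as [|? Y ? Ns' HXY HMN']; subst.
  exists (apps (subst0 Q Y) Ns'); split; [apply rt_step, step_apps_beta|].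
  right. apply star_ctx_clos; repeat split.
  - eapply ctx_clos_mono; [exact R1_sub_S1|].
    apply ctx_clos_apps; auto. apply ctx_clos_subst; auto.
  - eapply step_closed; [apply step_apps_beta | exact cM].
  - eapply step_closed; [apply step_apps_beta | exact cN].
Qed.

Lemma star_lam_sim P Q : ctx_clos R1 P Q -> closed (Lam P) -> closed (Lam Q) ->
  forall X Y, star (c1 RC) X Y -> c2 SC (subst0 P X) (subst0 Q Y).
Proof.
  intros HPQ cP cQ X Y HXY.
  apply star_idem, star_ctx_clos in HXY as (HXY & cX & cY).
  right. apply star_ctx_clos; repeat split; auto using closed_subst0.
  eapply ctx_clos_mono; [exact R1_sub_S1|]. apply ctx_clos_subst; auto.
Qed.

Lemma closureC_progress_fwd : progress_fwd RC SC.
Proof.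
  intros M N [(E & F & Ms & Ns & HEF & HMN & -> & ->) | HMN].
  { split; [intros M' HM'; eapply hrel_step_sim | intros P HP; eapply hrel_lam_sim]; eauto. }
  apply star_ctx_clos in HMN as (HMN & cM & cN).
  destruct (ctx_clos_spine _ _ _ HMN cM)
    as [(E & F & Ms & Ns & HEF & HMNs & -> & ->) | (P & Q & Ms & Ns & HPQ & HMNs & -> & ->)].
  - apply closed_apps in cM as [_ cMs]. apply closed_apps in cN as [_ cNs].
    assert (HMNs' : Forall2 (star R1) Ms Ns) by (apply Forall2_ctx_clos_star; auto).
    split; [intros M' HM'; eapply hrel_step_sim | intros P HP; eapply hrel_lam_sim]; eauto.
  - split; [intros M' HM'; eapply star_lam_step_sim; eauto|].
    intros P' HP. destruct (apps_eq_lam _ _ _ HP) as [-> HE]. injection HE as <-.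
    inversion HMNs; subst.
    exists Q; split; [apply rt_refl | apply star_lam_sim; auto].
Qed.

End ClosureProgress.

Lemma closureC_progress R S : rel_on_closed (c1 R) -> rincl (c1 R) (c2 R) ->
  rincl (c1 R) (c1 S) -> progress R S -> progress (closureC R) (closureC S).
Proof.
  destruct R as [R1 R2], S as [S1 S2]; simpl. intros R1_closed R1_sub_R2 R1_sub_S1.
  rewrite !progress_fwd_split. intros [Hfwd Hbwd]. split.
  - apply closureC_progress_fwd; auto.
  - eapply progress_fwd_mono;
      [ | | | apply (closureC_progress_fwd (transp term R1) (transp term R2)
                                         (transp term S1) (transp term S2)); auto ].
    + intros X Y H; apply star_transp; auto.
    + intros X Y; apply (closureC_transp_c2_inv (mkCrel R1 R2)).
    + intros X Y; apply (closureC_transp_c2 (mkCrel S1 S2)).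
    + intros X Y H; destruct (R1_closed _ _ H); split; auto.
    + intros X Y H; apply R1_sub_R2; auto.
    + intros X Y H; apply R1_sub_S1; auto.
Qed.

Lemma closureC_mono R S : cincl R S -> cincl (closureC R) (closureC S).
Proof.
  intros [H1 H2]. split; simpl; [apply star_mono; auto|].
  intros X Y [(E & F & Ms & Ns & HEF & HMN & -> & ->) | H].
  - left; exists E, F, Ms, Ns; repeat split; auto.
    eapply Forall2_impl; [apply star_mono | exact HMN]; auto.
  - right; eapply star_mono; eauto.
Qed.

Lemma closureC_coupled R : coupled R -> coupled (closureC R).
Proof.
  intros (_ & _ & R2_closed).
  assert (C_closed : rel_on_closed (c2 (closureC R))).
  { intros X Y [(E & F & Ms & Ns & HEF & HMN & -> & ->) | H]; [|eapply star_closed; eauto].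
    destruct (R2_closed _ _ HEF), (Forall2_star_closed _ _ _ HMN).
    rewrite !closed_apps; auto. }
  split; [|split]; auto.
  - intros X Y H; right; auto.
  - intros X Y H; exact (star_closed _ _ _ H).
Qed.

Lemma rel_sub_closureC R : rel_on_closed (c1 R) -> cincl R (closureC R).
Proof.
  intros HR. split; simpl; [apply rel_sub_star; auto|].
  intros X Y H. left. exists X, Y, [], []; repeat split; auto.
Qed.

Lemma closureC_idem_c2 R : rincl (c2 (closureC (closureC R))) (c2 (closureC R)).
Proof.
  destruct R as [R1 R2]; simpl. intros X Y [(E & F & Ms & Ns & HEF & HMN & -> & ->) | H].
  - assert (HMN' : Forall2 (star R1) Ms Ns)
      by (eapply Forall2_impl; [apply star_idem | exact HMN]).
    destruct HEF as [(E' & F' & Ms' & Ns' & HEF' & HMN'' & -> & ->) | H].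
    + left. exists E', F', (Ms' ++ Ms), (Ns' ++ Ns).
      rewrite !apps_app; repeat split; auto using Forall2_app.
    + right. destruct (Forall2_star_closed _ _ _ HMN') as [cMs cNs].
      apply star_ctx_clos in H as (H & cE & cF).
      apply star_ctx_clos; rewrite !closed_apps; repeat split; auto.
      apply ctx_clos_apps; auto.
      eapply Forall2_impl; [|exact HMN']. intros ? ? ?; apply star_ctx_clos; auto.
  - right; apply star_idem; auto.
Qed.

Theorem mainTheorem6 :
  (forall R S : crel, coupled R -> coupled S -> cincl R S -> progress R S ->
     cincl (closureC R) (closureC S) /\ progress (closureC R) (closureC S)) /\
  (forall R : crel, coupled R -> progress R (closureC R) ->
     exists B : crel, coupled_logical_bisim B /\ cincl R B) /\
  (forall R : crel, coupled_logical_bisim R -> coupled_logical_bisim (closureC R)).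
Proof.
  split; [|split].
  - intros R S (R1_sub_R2 & R1_closed & _) _ HRS HP.
    split; [apply closureC_mono | apply closureC_progress]; auto. apply HRS.
  - intros R HR HP. pose proof HR as (R1_sub_R2 & R1_closed & _).
    exists (closureC R); split; [split|].
    + apply closureC_coupled; auto.
    + apply progress_mono_r with (closureC (closureC R)); [apply closureC_idem_c2|].
      apply closureC_progress; auto. apply rel_sub_closureC; auto.
    + apply rel_sub_closureC; auto.
  - intros R [HR HP]. split; [apply closureC_coupled; auto|].
    destruct HR as (R1_sub_R2 & R1_closed & _).
    apply closureC_progress; auto. intros X Y H; auto.
Qed.
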